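(* Let $\lambda\in k$, $\lambda\neq0$. (i) Let $(A,\succ,\prec)$ be a Leibniz-dendriform algebra and $r\in A\otimes A$ such that $S(r)=0$, $r+\tau(r)$ is invariant and $T_{r+\tau(r)}$ is a linear isomorphism (i.e. $(A,\succ,\prec,\Delta_{\succ,r},\Delta_{\prec,r})$ is a factorizable Leibniz-dendriform bialgebra). Define $\omega(x,y)=-\lambda\langle T_{r+\tau(r)}^{-1}(x),y\rangle$ and $P=T_r\omega^\sharp$ (i.e. $P(x)=T_r(\omega^\sharp(x))$). Then $(A,\succ,\prec,P,\omega)$ is a quadratic Rota–Baxter Leibniz-dendriform algebra of weight $\lambda$. (ii) Conversely, let $(A,\succ,\prec,P,\omega)$ be a quadratic Rota–Baxter Leibniz-dendriform algebra of weight $\lambda$, and let $r\in A\otimes A$ be defined by $T_r=P(\omega^\sharp)^{-1}$. Then $S(r)=0$, $r+\tau(r)$ is invariant and $T_{r+\tau(r)}$ is a linear isomorphism; hence $(A,\succ,\prec,\Delta_{\succ,r},\Delta_{\prec,r})$ is a factorizable Leibniz-dendriform bialgebra.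
   Context: $\langle\cdot,\cdot\rangle$ is the natural pairing, $I$ the identity, $\tau(a\otimes b)=b\otimes a$; all spaces finite-dimensional over $k$. A Leibniz-dendriform algebra is a vector space $A$ with bilinear operations $\succ,\prec$ such that, with $x\circ y:=x\succ y+x\prec y$, for all $x,y,z$: $(x\circ y)\succ z=x\succ(y\succ z)-y\succ(x\succ z)$, $y\prec(x\circ z)+(x\succ y)\prec z=x\succ(y\prec z)$, $x\prec(y\circ z)=(x\prec y)\prec z+y\succ(x\prec z)$. Write $x\odot y:=x\succ y+y\prec x$, $x\star y:=x\circ y+y\circ x$; $L_*(x)y=x*y$, $R_*(x)y=y*x$; $L_\odot:=L_\succ+R_\prec$, $L_\star:=L_\circ+R_\circ$. For $r=\sum_ia_i\otimes b_i$: $T_r:A^*\to A$, $\langle T_r(\zeta),\eta\rangle=\langle r,\zeta\otimes\eta\rangle$; $S(r):=\sum_{i,j}\big(a_i\otimes a_j\otimes (b_j\circ b_i)-a_i\otimes (b_i\odot a_j)\otimes b_j-(a_i\succ a_j)\otimes b_i\otimes b_j\big)$. $s\in A\otimes A$ is invariant if for all $x$: $(L_\odot(x)\otimes I-I\otimes R_\circ(x))s=0$ and $(L_\star(x)\otimes I-I\otimes R_\prec(x))\tau(s)=0$. Coboundary maps $\Delta_{\succ,r}(x)=(L_\odot(x)\otimes I-I\otimes R_\circ(x))r$, $\Delta_{\prec,r}(x)=(L_\star(x)\otimes I-I\otimes R_\prec(x))\tau(r)$; the resulting bialgebra is called factorizable when $S(r)=0$, $r+\tau(r)$ is invariant and $T_{r+\tau(r)}$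 is bijective. For a bilinear form $\omega$, $\omega^\sharp:A\to A^*$ is $\langle\omega^\sharp(x),y\rangle=\omega(x,y)$. A quadratic Leibniz-dendriform algebra is one with a non-degenerate symmetric bilinear form $\omega$ with $\omega(x\prec y,z)=\omega(x,y\circ z+z\circ y)$ and $\omega(x\succ y,z)=-\omega(y,x\circ z)$ for all $x,y,z$. A Rota–Baxter operator of weight $\lambda$ on $(A,\succ,\prec)$ is a linear $P$ with $P(x)\succ P(y)=P(P(x)\succ y+x\succ P(y)+\lambda x\succ y)$ and $P(x)\prec P(y)=P(P(x)\prec y+x\prec P(y)+\lambda x\prec y)$. $(A,\succ,\prec,P,\omega)$ is a quadratic Rota–Baxter Leibniz-dendriform algebra of weight $\lambda$ if $(A,\succ,\prec,\omega)$ is quadratic, $P$ is a Rota–Baxter operator of weight $\lambda$, and $\omega(P(x),y)+\omega(x,P(y))+\lambda\omega(x,y)=0$ for all $x,y$. *)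

(* A = K^n (row vectors 'rV[K]_n with standard basis
   bvec i), A* = K^n with the dual basis, A (x) A = n x n matrices
   (r = \sum_{p,q} r p q  bvec p (x) bvec q), A (x) A (x) A = functions
   'I_n -> 'I_n -> 'I_n -> K (coefficients in the basis). *)
From HB Require Import structures.
From mathcomp Require Import all_boot all_order all_algebra.
Set Implicit Arguments. Unset Strict Implicit. Unset Printing Implicit Defensive.
Import GRing.Theory.
Local Open Scope ring_scope.

Section LD.
Variables (K : fieldType) (n : nat).
Local Notation A := 'rV[K]_n.

Definition bvec (i : 'I_n) : A := delta_mx 0 i.

Definition pairing (zeta x : A) : K := \sum_i zeta 0 i * x 0 i.

Definition bilinear_op (f : A -> A -> A) : Prop :=
  (forall (a : K) x y z, f (a *: x + y) z = a *: f x z + f y z) /\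
  (forall (a : K) x y z, f z (a *: x + y) = a *: f z x + f z y).

Definition lin_map (f : A -> A) : Prop :=
  forall (a : K) x y, f (a *: x + y) = a *: f x + f y.

Definition bilinear_form (w : A -> A -> K) : Prop :=
  (forall (a : K) x y z, w (a *: x + y) z = a * w x z + w y z) /\
  (forall (a : K) x y z, w z (a *: x + y) = a * w z x + w z y).

Definition circ (sc pc : A -> A -> A) x y := sc x y + pc x y.
Definition odot (sc pc : A -> A -> A) x y := sc x y + pc y x.
Definition star (sc pc : A -> A -> A) x y := circ sc pc x y + circ sc pc y x.

Definition LD_algebra (sc pc : A -> A -> A) : Prop :=
  bilinear_op sc /\ bilinear_op pc /\
  (forall x y z, sc (circ sc pc x y) z = sc x (sc y z) - sc y (sc x z)) /\
  (forall x y z, pc y (circ sc pc x z) + pc (sc x y) z = sc x (pc y z)) /\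
  (forall x y z, pc x (circ sc pc y z) = pc (pc x y) z + sc y (pc x z)).

Definition tens (u v : A) : 'M[K]_n := u^T *m v.

Definition tmap (f g : A -> A) (s : 'M[K]_n) : 'M[K]_n :=
  \sum_p \sum_q s p q *: tens (f (bvec p)) (g (bvec q)).

(* tau(s) = s^T ; invariance of s *)
Definition invariant_tensor (sc pc : A -> A -> A) (s : 'M[K]_n) : Prop :=
  forall x : A,
    tmap (odot sc pc x) id s - tmap id (fun y => circ sc pc y x) s = 0 /\
    tmap (star sc pc x) id s^T - tmap id (fun y => pc y x) s^T = 0.

(* T_r : A^* -> A, <T_r zeta, eta> = <r, zeta (x) eta> *)
Definition Tr (r : 'M[K]_n) (zeta : A) : A := zeta *m r.

Definition tens3 (u v w : A) (i j k : 'I_n) : K := u 0 i * v 0 j * w 0 k.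

(* coefficients of S(r) in A (x) A (x) A *)
Definition Sop (sc pc : A -> A -> A) (r : 'M[K]_n) (i j k : 'I_n) : K :=
  \sum_p \sum_q \sum_s \sum_t r p q * r s t *
    ( tens3 (bvec p) (bvec s) (circ sc pc (bvec t) (bvec q)) i j k
    - tens3 (bvec p) (odot sc pc (bvec q) (bvec s)) (bvec t) i j k
    - tens3 (sc (bvec p) (bvec s)) (bvec q) (bvec t) i j k).

Definition S_zero (sc pc : A -> A -> A) (r : 'M[K]_n) : Prop :=
  forall i j k, Sop sc pc r i j k = 0.

Definition factorizable (sc pc : A -> A -> A) (r : 'M[K]_n) : Prop :=
  [/\ S_zero sc pc r, invariant_tensor sc pc (r + r^T) & ((r + r^T) \in unitmx)].

Definition omega_sharp (w : A -> A -> K) (x : A) : A := \row_j w x (bvec j).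

Definition quadratic_LD (sc pc : A -> A -> A) (w : A -> A -> K) : Prop :=
  [/\ LD_algebra sc pc, bilinear_form w,
      (forall x y, w x y = w y x) /\ (forall x, (forall y, w x y = 0) -> x = 0),
      (forall x y z, w (pc x y) z = w x (circ sc pc y z + circ sc pc z y)) &
      (forall x y z, w (sc x y) z = - w y (circ sc pc x z))].

Definition RB_operator (sc pc : A -> A -> A) (P : A -> A) (lam : K) : Prop :=
  [/\ lin_map P,
      (forall x y, sc (P x) (P y) = P (sc (P x) y + sc x (P y) + lam *: sc x y)) &
      (forall x y, pc (P x) (P y) = P (pc (P x) y + pc x (P y) + lam *: pc x y))].

Definition quadratic_RB_LD (sc pc : A -> A -> A) (P : A -> A)
    (w : A -> A -> K) (lam : K) : Prop :=
  [/\ quadratic_LD sc pc w, RB_operator sc pc P lam &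
      (forall x y, w (P x) y + w x (P y) + lam * w x y = 0)].

Definition omega_of (r : 'M[K]_n) (lam : K) (x y : A) : K :=
  - lam * pairing (x *m invmx (r + r^T)) y.

End LD.

From Pilot Require Import Defs.
From HB Require Import structures.
From mathcomp Require Import all_boot all_order all_algebra.
From mathcomp Require Import ring.
Set Implicit Arguments. Unset Strict Implicit. Unset Printing Implicit Defensive.
Import GRing.Theory.
Local Open Scope ring_scope.

(* Let W be the Gram matrix of w, so that w^sharp x = x W and P = T_r w^sharp
   is x |-> x W r.  In both directions everything hinges on the identity
   (r + r^T) W = -lam: in (i) it is the definition of w, in (ii) it is the
   compatibility w(Px,y) + w(x,Py) + lam w(x,y) = 0 rewritten with W
   invertible.  It gives T_{tau r} w^sharp = -lam - P, so invariance of
   r + tau(r) becomes the two invariance identities of w, and pairing S(r)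
   with w^sharp z (x) w^sharp y (x) w^sharp x yields
   w(x, Py o Pz - P(Py o z + y o Pz + lam y o z)).  Hence S(r) = 0 iff P is a
   Rota-Baxter operator for o = succ + prec, which, again by invariance of w,
   holds iff P is one for succ and for prec separately. *)

Section RowSpace.
Variables (K : fieldType) (n : nat).
Local Notation A := 'rV[K]_n.
Local Notation e := (@bvec K n).
Implicit Types (x y : A) (M : 'M[K]_n).

Definition linfun (f : A -> A) (hf : lin_map f) : {linear A -> A} :=
  HB.pack f (GRing.isLinear.Build K A A ( *:%R) f hf).

Definition scalfun (f : A -> K) (hf : scalar f) : {scalar A} :=
  HB.pack f (GRing.isLinear.Build K A K^o ( *%R) f hf).

Section LinearLemmas.
Variable f : A -> A.
Hypothesis hf : lin_map f.
Lemma lin_mapD x y : f (x + y) = f x + f y.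
Proof. by have /= := linearD (linfun hf) x y. Qed.
Lemma lin_mapN x : f (- x) = - f x.
Proof. by have /= := linearN (linfun hf) x. Qed.
Lemma lin_mapZ c x : f (c *: x) = c *: f x.
Proof. by have /= := linearZ_LR (linfun hf) c x. Qed.
Lemma lin_map_expand x : f x = \sum_i x 0 i *: f (e i).
Proof.
pose F := linfun hf; rewrite -[f x]/(F x) {1}[x]row_sum_delta linear_sum.
by apply: eq_bigr => i _; rewrite linearZ.
Qed.
End LinearLemmas.

Section ScalarLemmas.
Variable f : A -> K.
Hypothesis hf : scalar f.
Lemma scalarD x y : f (x + y) = f x + f y.
Proof. by have /= := linearD (scalfun hf) x y. Qed.
Lemma scalarN x : f (- x) = - f x.
Proof. by have /= := linearN (scalfun hf) x. Qed.
Lemma scalarZ c x : f (c *: x) = c * f x.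
Proof. by have /= := linearZ_LR (scalfun hf) c x. Qed.
Lemma scalar_expand x : f x = \sum_i x 0 i * f (e i).
Proof.
pose F := scalfun hf; rewrite -[f x]/(F x) {1}[x]row_sum_delta linear_sum.
by apply: eq_bigr => i _; rewrite linearZ.
Qed.
End ScalarLemmas.

Lemma bvecE i j : e i 0 j = (i == j)%:R.
Proof. by rewrite /bvec mxE eqxx /= eq_sym. Qed.

Lemma bvec_mulmx i M j : (e i *m M) 0 j = M i j.
Proof. by rewrite /bvec -rowE mxE. Qed.

Lemma lin_map_add (f g : A -> A) :
  lin_map f -> lin_map g -> lin_map (fun x => f x + g x).
Proof. by move=> hf hg a x y; rewrite hf hg scalerDr addrACA. Qed.

Lemma bilinear_entry (f : A -> A -> A) :
    (forall z, lin_map (f^~ z)) -> (forall z, lin_map (f z)) ->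
  forall u v k, f u v 0 k = \sum_t \sum_q u 0 t * v 0 q * f (e t) (e q) 0 k.
Proof.
move=> hl hr u v k; rewrite (lin_map_expand (hl v) u).
rewrite summxE; apply: eq_bigr => t _; rewrite mxE.
rewrite (lin_map_expand (hr (e t)) v).
by rewrite summxE mulr_sumr; apply: eq_bigr => q _; rewrite mxE; ring.
Qed.

Lemma tmapE (f g : A -> A) (s : 'M[K]_n) :
  tmap f g s = (lin1_mx f)^T *m s *m lin1_mx g.
Proof.
apply/matrixP => i j; rewrite summxE !mxE.
under eq_bigr => p _ do rewrite summxE.
under [RHS]eq_bigr => q _ do rewrite !mxE big_distrl.
rewrite exchange_big /=; apply: eq_bigr => p _; apply: eq_bigr => q _.
by rewrite !mxE big_ord1 !mxE; ring.
Qed.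

Definition mxform M x y : K := (x *m M *m y^T) 0 0.

Lemma mxform_bvec M i j : mxform M (e i) (e j) = M i j.
Proof. by rewrite /mxform /bvec -rowE trmx_delta -colE !mxE. Qed.

Lemma mxform_bvecr M x j : mxform M x (e j) = (x *m M) 0 j.
Proof. by rewrite /mxform /bvec trmx_delta -colE !mxE. Qed.

Lemma mxform_inj M1 M2 : (forall x y, mxform M1 x y = mxform M2 x y) -> M1 = M2.
Proof. by move=> h; apply/matrixP => i j; rewrite -!mxform_bvec h. Qed.

Lemma mxform_mull M B x y : mxform M (x *m B) y = mxform (B *m M) x y.
Proof. by rewrite /mxform mulmxA. Qed.

Lemma mxform_mulr M B x y : mxform M x (y *m B) = mxform (M *m B^T) x y.
Proof. by rewrite /mxform trmx_mul !mulmxA. Qed.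

Lemma mxformDM M1 M2 x y : mxform (M1 + M2) x y = mxform M1 x y + mxform M2 x y.
Proof. by rewrite /mxform mulmxDr mulmxDl mxE. Qed.

Lemma mxformZM c M x y : mxform (c *: M) x y = c * mxform M x y.
Proof. by rewrite /mxform -scalemxAr -scalemxAl mxE. Qed.

Lemma mxform_sym M x y : M^T = M -> mxform M x y = mxform M y x.
Proof.
move=> sM; rewrite /mxform.
have -> : (x *m M *m y^T) 0 0 = ((x *m M *m y^T)^T) 0 0 by rewrite [RHS]mxE.
by rewrite !trmx_mul trmxK sM mulmxA.
Qed.

Lemma mxform_scalarl M y : scalar ((mxform M)^~ y).
Proof. by move=> a x x'; rewrite /mxform !mulmxDl -!scalemxAl !mxE. Qed.

Lemma mxform_scalarr M x : scalar (mxform M x).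
Proof.
move=> a y y'; rewrite /mxform !mxE mulr_sumr -big_split /=.
by apply: eq_bigr => k _; rewrite !mxE; ring.
Qed.

Lemma pairing_mxform (u v : A) : pairing u v = mxform 1%:M u v.
Proof.
by rewrite /mxform mulmx1 mxE; apply: eq_bigr => k _; rewrite mxE.
Qed.

Lemma pairing_bvec k (v : A) : pairing (e k) v = v 0 k.
Proof. by rewrite pairing_mxform mxform_sym ?tr_scalar_mx // mxform_bvecr mulmx1. Qed.

Lemma pairing_scalarl (v : A) : scalar (fun u : A => pairing u v).
Proof. by move=> a u u'; rewrite !pairing_mxform mxform_scalarl. Qed.

Lemma pairing_scalarr (u : A) : scalar (pairing u).
Proof. by move=> a v v'; rewrite !pairing_mxform mxform_scalarr. Qed.

Lemma omega_sharp_mxform (w : A -> A -> K) M :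
  (forall x y, w x y = mxform M x y) -> forall x, omega_sharp w x = x *m M.
Proof. by move=> wE x; apply/rowP => j; rewrite mxE wE mxform_bvecr. Qed.

Definition gram_mx (w : A -> A -> K) : 'M[K]_n := \matrix_(i, j) w (e i) (e j).

Lemma mxform_gram (w : A -> A -> K) :
  bilinear_form w -> forall x y, w x y = mxform (gram_mx w) x y.
Proof.
case=> wl wr x y; have wsl z : scalar (w^~ z) by move=> a u v; apply: wl.
have wsr z : scalar (w z) by move=> a u v; apply: wr.
rewrite (scalar_expand (wsl y)) (scalar_expand (mxform_scalarl _ y)).
apply: eq_bigr => i _.
rewrite (scalar_expand (wsr _)) (scalar_expand (mxform_scalarr _ _)).
by congr (_ * _); apply: eq_bigr => j _; rewrite mxform_bvec mxE.
Qed.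

Lemma mxform_nondeg_unit M :
  (forall x, (forall y, mxform M x y = 0) -> x = 0) -> M \in unitmx.
Proof.
move=> nd; rewrite unitmxE unitfE; apply/negP => /det0P [v /negP v0 vM0].
by apply/v0/eqP/nd => y; rewrite /mxform vM0 mul0mx mxE.
Qed.

End RowSpace.

Section LeibnizDendriformOps.
Variables (K : fieldType) (n : nat).
Local Notation A := 'rV[K]_n.
Local Notation e := (@bvec K n).
Implicit Types u v x y z : A.
Variables (sc pc : A -> A -> A).
Hypotheses (hsc : bilinear_op sc) (hpc : bilinear_op pc).
Local Notation circ := (circ sc pc).
Local Notation odot := (odot sc pc).

Lemma sc_linl z : lin_map (sc^~ z). Proof. by case: hsc => h _ a x y; apply: h. Qed.
Lemma sc_linr z : lin_map (sc z). Proof. by case: hsc => _ h a x y; apply: h. Qed.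
Lemma pc_linl z : lin_map (pc^~ z). Proof. by case: hpc => h _ a x y; apply: h. Qed.
Lemma pc_linr z : lin_map (pc z). Proof. by case: hpc => _ h a x y; apply: h. Qed.

Lemma scDl u v z : sc (u + v) z = sc u z + sc v z.
Proof. exact: lin_mapD (sc_linl z) u v. Qed.
Lemma scNl u z : sc (- u) z = - sc u z.
Proof. exact: lin_mapN (sc_linl z) u. Qed.
Lemma scZl c u z : sc (c *: u) z = c *: sc u z.
Proof. exact: lin_mapZ (sc_linl z) c u. Qed.
Lemma scDr u v z : sc z (u + v) = sc z u + sc z v.
Proof. exact: lin_mapD (sc_linr z) u v. Qed.
Lemma scZr c u z : sc z (c *: u) = c *: sc z u.
Proof. exact: lin_mapZ (sc_linr z) c u. Qed.
Lemma pcDl u v z : pc (u + v) z = pc u z + pc v z.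
Proof. exact: lin_mapD (pc_linl z) u v. Qed.
Lemma pcNl u z : pc (- u) z = - pc u z.
Proof. exact: lin_mapN (pc_linl z) u. Qed.
Lemma pcZl c u z : pc (c *: u) z = c *: pc u z.
Proof. exact: lin_mapZ (pc_linl z) c u. Qed.
Lemma pcDr u v z : pc z (u + v) = pc z u + pc z v.
Proof. exact: lin_mapD (pc_linr z) u v. Qed.
Lemma pcZr c u z : pc z (c *: u) = c *: pc z u.
Proof. exact: lin_mapZ (pc_linr z) c u. Qed.

Lemma circ_linl z : lin_map (circ^~ z).
Proof. exact: lin_map_add (sc_linl z) (pc_linl z). Qed.
Lemma circ_linr z : lin_map (circ z).
Proof. exact: lin_map_add (sc_linr z) (pc_linr z). Qed.
Lemma odot_linl z : lin_map (odot^~ z).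
Proof. exact: lin_map_add (sc_linl z) (pc_linr z). Qed.
Lemma odot_linr z : lin_map (odot z).
Proof. exact: lin_map_add (sc_linr z) (pc_linl z). Qed.
Lemma star_linr z : lin_map (star sc pc z).
Proof. exact: lin_map_add (circ_linr z) (circ_linl z). Qed.

Variable r : 'M[K]_n.

(* [S_pair zeta eta theta] is the pairing of S(r) with zeta (x) eta (x) theta;
   T_r zeta = zeta *m r and T_{tau r} zeta = zeta *m r^T. *)
Definition S_pair (zeta eta theta : A) : K :=
  pairing theta (circ (eta *m r) (zeta *m r))
  - pairing eta (odot (zeta *m r) (theta *m r^T))
  - pairing zeta (sc (eta *m r^T) (theta *m r^T)).

Ltac S_pair_linear :=
  move=> c a b; rewrite /S_pair /Defs.odot /Defs.circ !mulmxDl -!scalemxAl;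
  rewrite !(scDl, scDr, scZl, scZr, pcDl, pcDr, pcZl, pcZr);
  rewrite !(scalarD (pairing_scalarl _), scalarZ (pairing_scalarl _),
            scalarD (pairing_scalarr _), scalarZ (pairing_scalarr _));
  ring.

Lemma S_pair_scalar1 eta theta : scalar (fun zeta => S_pair zeta eta theta).
Proof. S_pair_linear. Qed.

Lemma S_pair_scalar2 zeta theta : scalar (fun eta => S_pair zeta eta theta).
Proof. S_pair_linear. Qed.

Lemma S_pair_scalar3 zeta eta : scalar (S_pair zeta eta).
Proof. S_pair_linear. Qed.

Lemma S_pair_bvec_eq0 : (forall i j k, S_pair (e i) (e j) (e k) = 0) ->
  forall zeta eta theta, S_pair zeta eta theta = 0.
Proof.
move=> h zeta eta theta.
rewrite (scalar_expand (S_pair_scalar1 eta theta) zeta); apply: big1 => i _.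
rewrite (scalar_expand (S_pair_scalar2 (e i) theta) eta) big1 ?mulr0 // => j _.
rewrite (scalar_expand (S_pair_scalar3 (e i) (e j)) theta).
by rewrite big1 ?mulr0 // => k _; rewrite h mulr0.
Qed.

Lemma bvec_neq p i : p != i -> e p 0 i = 0.
Proof. by move=> h; rewrite bvecE (negbTE h). Qed.

Lemma bvec_eq i : e i 0 i = 1.
Proof. by rewrite bvecE eqxx. Qed.

Lemma sum4B (F G : 'I_n -> 'I_n -> 'I_n -> 'I_n -> K) :
  \sum_p \sum_q \sum_s \sum_t (F p q s t - G p q s t) =
  \sum_p \sum_q \sum_s \sum_t F p q s t - \sum_p \sum_q \sum_s \sum_t G p q s t.
Proof.
rewrite -sumrB; apply: eq_bigr => p _; rewrite -sumrB; apply: eq_bigr => q _.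
by rewrite -sumrB; apply: eq_bigr => s _; rewrite -sumrB.
Qed.

Lemma Sop_split i j k : Sop sc pc r i j k =
  \sum_p \sum_q \sum_s \sum_t (r p q * r s t * (e p 0 i * e s 0 j * circ (e t) (e q) 0 k))
  - \sum_p \sum_q \sum_s \sum_t (r p q * r s t * (e p 0 i * odot (e q) (e s) 0 j * e t 0 k))
  - \sum_p \sum_q \sum_s \sum_t (r p q * r s t * (sc (e p) (e s) 0 i * e q 0 j * e t 0 k)).
Proof.
rewrite -!sum4B /Sop /tens3; apply: eq_bigr => p _; apply: eq_bigr => q _.
by apply: eq_bigr => s _; apply: eq_bigr => t _; ring.
Qed.

Lemma sum_collapse_ps i j (C : 'I_n -> 'I_n -> K) :
  \sum_p \sum_q \sum_s \sum_t (r p q * r s t * (e p 0 i * e s 0 j * C t q))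
  = \sum_q \sum_t r i q * r j t * C t q.
Proof.
rewrite (bigD1 i) //= [X in _ + X]big1 ?addr0; last first.
  move=> p hp; apply: big1 => q _; apply: big1 => s _; apply: big1 => t _.
  by rewrite (bvec_neq hp); ring.
apply: eq_bigr => q _; rewrite (bigD1 j) //= [X in _ + X]big1 ?addr0; last first.
  by move=> s hs; apply: big1 => t _; rewrite (bvec_neq hs); ring.
by apply: eq_bigr => t _; rewrite !bvec_eq; ring.
Qed.

Lemma sum_collapse_pt i k (C : 'I_n -> 'I_n -> K) :
  \sum_p \sum_q \sum_s \sum_t (r p q * r s t * (e p 0 i * C q s * e t 0 k))
  = \sum_q \sum_s r i q * r s k * C q s.
Proof.
rewrite (bigD1 i) //= [X in _ + X]big1 ?addr0; last first.
  move=> p hp; apply: big1 => q _; apply: big1 => s _; apply: big1 => t _.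
  by rewrite (bvec_neq hp); ring.
apply: eq_bigr => q _; apply: eq_bigr => s _.
rewrite (bigD1 k) //= [X in _ + X]big1 ?addr0; last first.
  by move=> t ht; rewrite (bvec_neq ht); ring.
by rewrite !bvec_eq; ring.
Qed.

Lemma sum_collapse_qt j k (C : 'I_n -> 'I_n -> K) :
  \sum_p \sum_q \sum_s \sum_t (r p q * r s t * (C p s * e q 0 j * e t 0 k))
  = \sum_p \sum_s r p j * r s k * C p s.
Proof.
apply: eq_bigr => p _; rewrite (bigD1 j) //= [X in _ + X]big1 ?addr0; last first.
  move=> q hq; apply: big1 => s _; apply: big1 => t _.
  by rewrite (bvec_neq hq); ring.
apply: eq_bigr => s _; rewrite (bigD1 k) //= [X in _ + X]big1 ?addr0; last first.
  by move=> t ht; rewrite (bvec_neq ht); ring.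
by rewrite !bvec_eq; ring.
Qed.

Lemma Sop_S_pair i j k : Sop sc pc r i j k = S_pair (e i) (e j) (e k).
Proof.
rewrite Sop_split (sum_collapse_ps i j (fun t q => circ (e t) (e q) 0 k)).
rewrite (sum_collapse_pt i k (fun q s => odot (e q) (e s) 0 j)).
rewrite (sum_collapse_qt j k (fun p s => sc (e p) (e s) 0 i)).
rewrite /S_pair !pairing_bvec (bilinear_entry circ_linl circ_linr).
rewrite (bilinear_entry odot_linl odot_linr) (bilinear_entry sc_linl sc_linr).
rewrite exchange_big /=.
by congr (_ - _ - _); apply: eq_bigr => a _; apply: eq_bigr => b _;
  rewrite !bvec_mulmx !mxE; ring.
Qed.

Lemma S_zeroP : S_zero sc pc r <-> forall zeta eta theta, S_pair zeta eta theta = 0.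
Proof.
split=> [h|h i j k]; last by rewrite Sop_S_pair h.
by apply: S_pair_bvec_eq0 => i j k; rewrite -Sop_S_pair h.
Qed.

End LeibnizDendriformOps.

Section GramMatrix.
Variables (K : fieldType) (n : nat).
Local Notation A := 'rV[K]_n.
Implicit Types u v x y z a b : A.
Variables (sc pc : A -> A -> A).
Hypotheses (hsc : bilinear_op sc) (hpc : bilinear_op pc).
Local Notation circ := (circ sc pc).
Local Notation odot := (odot sc pc).
Local Notation star := (star sc pc).

Variables (r W : 'M[K]_n) (lam : K).
Hypotheses (lam0 : lam != 0) (W_sym : W^T = W) (W_unit : W \in unitmx)
  (rW : (r + r^T) *m W = (- lam)%:M).
Variables (w : A -> A -> K) (P : A -> A).
Hypotheses (wE : forall x y, w x y = mxform W x y) (PE : forall x, P x = x *m W *m r).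

Local Notation N := (r + r^T).

Lemma Wr : W *m N = (- lam)%:M.
Proof.
by have := congr1 trmx rW; rewrite trmx_mul W_sym raddfD /= trmxK addrC tr_scalar_mx.
Qed.

Lemma intertwine_N_W (F G : 'M[K]_n) : F^T *m N = N *m G <-> W *m F^T = G *m W.
Proof.
have lamN0 : - lam != 0 by rewrite oppr_eq0.
split=> h; apply: (scalerI lamN0).
  by rewrite -mul_mx_scalar -rW -mul_scalar_mx -Wr !mulmxA -(mulmxA W F^T) h !mulmxA.
by rewrite -mul_scalar_mx -rW -mul_mx_scalar -Wr !mulmxA -(mulmxA N W) h !mulmxA.
Qed.

Lemma w_scalarl z : scalar (w^~ z).
Proof. by move=> c x y; rewrite !wE; apply: mxform_scalarl. Qed.
Lemma w_scalarr z : scalar (w z).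
Proof. by move=> c x y; rewrite !wE; apply: mxform_scalarr. Qed.

Lemma wDl u v z : w (u + v) z = w u z + w v z. Proof. exact: scalarD (w_scalarl z) u v. Qed.
Lemma wNl u z : w (- u) z = - w u z. Proof. exact: scalarN (w_scalarl z) u. Qed.
Lemma wZl c u z : w (c *: u) z = c * w u z. Proof. exact: scalarZ (w_scalarl z) c u. Qed.
Lemma wDr u v z : w z (u + v) = w z u + w z v. Proof. exact: scalarD (w_scalarr z) u v. Qed.
Lemma wNr u z : w z (- u) = - w z u. Proof. exact: scalarN (w_scalarr z) u. Qed.
Lemma wZr c u z : w z (c *: u) = c * w z u. Proof. exact: scalarZ (w_scalarr z) c u. Qed.

Lemma w_sym x y : w x y = w y x.
Proof. by rewrite !wE mxform_sym. Qed.

Lemma w_nondeg x : (forall y, w x y = 0) -> x = 0.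
Proof.
move=> h; have xW0 : x *m W = 0.
  by apply/rowP => j; rewrite -mxform_bvecr -wE h mxE.
by rewrite -[x]mulmx1 -(mulmxV W_unit) mulmxA xW0 mul0mx.
Qed.

Lemma lin1_mx_id : lin1_mx (@id A) = 1%:M.
Proof. by apply/matrixP => i j; rewrite !mxE eqxx eq_sym. Qed.

Lemma tmap_adjointP (f g : A -> A) : lin_map f -> lin_map g ->
  tmap f id N - tmap id g N = 0 <-> forall a b, w a (f b) = w (g a) b.
Proof.
move=> hf hg; rewrite !tmapE lin1_mx_id trmx1 mulmx1 mul1mx.
have wf a b : w a (f b) = mxform (W *m (lin1_mx f)^T) a b.
  by rewrite wE -mxform_mulr; have /= -> := mul_rV_lin1 (linfun hf) b.
have wg a b : w (g a) b = mxform (lin1_mx g *m W) a b.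
  by rewrite wE -mxform_mull; have /= -> := mul_rV_lin1 (linfun hg) a.
split=> [/subr0_eq /intertwine_N_W h a b | h]; first by rewrite wf wg h.
apply/eqP; rewrite subr_eq0; apply/eqP/intertwine_N_W/mxform_inj => a b.
by rewrite -wf -wg.
Qed.

Lemma invariant_tensor_adjointP : invariant_tensor sc pc N <->
  forall x a b, w a (odot x b) = w (circ a x) b /\ w a (star x b) = w (pc a x) b.
Proof.
have N_sym : N^T = N by rewrite raddfD /= trmxK addrC.
have odotP x := tmap_adjointP (odot_linr hsc hpc x) (circ_linl hsc hpc x).
have starP x := tmap_adjointP (star_linr hsc hpc x) (pc_linl hpc x).
rewrite /invariant_tensor N_sym; split=> h x.
  by have [/odotP h1 /starP h2] := h x => a b; split; [apply: h1 | apply: h2].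
by split; [apply/odotP | apply/starP] => a b; have [] := h x a b.
Qed.

Definition prec_invariant := forall x y z, w (pc x y) z = w x (circ y z + circ z y).
Definition succ_invariant := forall x y z, w (sc x y) z = - w y (circ x z).

Lemma invariant_tensorP :
  invariant_tensor sc pc N <-> prec_invariant /\ succ_invariant.
Proof.
rewrite invariant_tensor_adjointP; split=> [h | [hp hs] x a b].
  have hp : prec_invariant by move=> x y z; have [_ <-] := h y x z.
  split=> // x y z; have [+ _] := h x z y.
  rewrite /Defs.odot wDr (w_sym z (pc y x)) hp wDr (w_sym z) (w_sym (circ z x)) => E.
  by apply: (addIr (w y (circ x z) + w y (circ z x))); rewrite E; ring.
split; last by rewrite hp.
by rewrite /Defs.odot wDr (w_sym a) (w_sym a) hs hp wDr (w_sym (circ a x)); ring.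
Qed.

Lemma P_lin : lin_map P.
Proof. by move=> c x y; rewrite !PE !mulmxDl -!scalemxAl. Qed.

Lemma PD u v : P (u + v) = P u + P v. Proof. exact: lin_mapD P_lin u v. Qed.
Lemma PN u : P (- u) = - P u. Proof. exact: lin_mapN P_lin u. Qed.
Lemma PZ c u : P (c *: u) = c *: P u. Proof. exact: lin_mapZ P_lin c u. Qed.

Lemma w_P_compat x y : w (P x) y + w x (P y) + lam * w x y = 0.
Proof.
rewrite !PE !wE -!mulmxA mxform_mull mxform_mulr -mxformDM trmx_mul W_sym.
have -> : W *m r *m W + W *m (r^T *m W) = W *m N *m W.
  by rewrite mulmxA -mulmxDl -mulmxDr.
by rewrite Wr mul_scalar_mx mxformZM; ring.
Qed.

Lemma w_Pl a b : w (P a) b = - w a (P b) - lam * w a b.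
Proof.
by apply: (addIr (w a (P b) + lam * w a b)); rewrite [LHS]addrA w_P_compat; ring.
Qed.

Lemma mul_W_trr x : x *m W *m r^T = - lam *: x - P x.
Proof.
have := congr1 (mulmx x) Wr; rewrite mulmxA mulmxDr mul_mx_scalar -PE => <-.
by rewrite addrAC subrr add0r.
Qed.

Lemma w_P_adjoint x v : w (- lam *: x - P x) v = w x (P v).
Proof. by rewrite wDl wNl wZl w_Pl; ring. Qed.

Definition rb_identity (op : A -> A -> A) :=
  forall x y, op (P x) (P y) = P (op (P x) y + op x (P y) + lam *: op x y).

Lemma pairing_mulW x v : pairing (x *m W) v = w x v.
Proof. by rewrite pairing_mxform mxform_mull mulmx1 wE. Qed.

(* Invariance moves every product in S(r) to the second argument of w, where
   the three terms of S(r) become the three terms of the Rota-Baxter defect. *)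
Lemma S_pair_mulW : prec_invariant -> succ_invariant -> forall x y z,
  S_pair sc pc r (z *m W) (y *m W) (x *m W) =
  w x (circ (P y) (P z) - P (circ (P y) z + circ y (P z) + lam *: circ y z)).
Proof.
move=> hp hs x y z.
rewrite /S_pair !pairing_mulW -!PE !mul_W_trr /Defs.odot wDr (w_sym y) (w_sym y).
rewrite hs hp (w_sym z) hs !w_P_adjoint /Defs.circ.
rewrite !(wDr, wNr, wZr, PD, PN, PZ, scDl hsc, scNl hsc, scZl hsc,
          pcDl hpc, pcNl hpc, pcZl hpc).
ring.
Qed.

Lemma S_zero_rb_identity : prec_invariant -> succ_invariant ->
  S_zero sc pc r <-> rb_identity circ.
Proof.
move=> hp hs; rewrite (S_zeroP hsc hpc); split=> h.
  by move=> y z; apply/subr0_eq/w_nondeg => x; rewrite w_sym -S_pair_mulW // h.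
move=> zeta eta theta; rewrite -[zeta](mulmxKV W_unit) -[eta](mulmxKV W_unit).
by rewrite -[theta](mulmxKV W_unit) S_pair_mulW // h subrr -(scale0r 0) wZr mul0r.
Qed.

Lemma rb_identity_circ : rb_identity sc -> rb_identity pc -> rb_identity circ.
Proof.
move=> hs hp x y; rewrite /Defs.circ hs hp !(PD, PZ, scalerDr).
by apply/rowP => k; rewrite !mxE; ring.
Qed.

(* Pairing with z, invariance turns both sides of each identity into
   expressions in which sc and pc only occur inside circ. *)
Lemma rb_identity_split : prec_invariant -> succ_invariant ->
  rb_identity circ -> rb_identity sc /\ rb_identity pc.
Proof.
move=> hp hs hc; split=> x y; apply/subr0_eq/w_nondeg => z.
  rewrite !(PD, PN, PZ, wDl, wNl, wZl) !w_Pl !hs !w_Pl hc /Defs.circ.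
  by rewrite !(wDr, wNr, wZr, PD, PN, PZ); ring.
rewrite !(PD, PN, PZ, wDl, wNl, wZl) !w_Pl !hp !w_Pl !hc /Defs.circ.
by rewrite !(wDr, wNr, wZr, PD, PN, PZ); ring.
Qed.

Lemma gram_quadratic_RB : LD_algebra sc pc -> invariant_tensor sc pc N ->
  S_zero sc pc r -> quadratic_RB_LD sc pc P w lam.
Proof.
move=> hLD /invariant_tensorP [hp hs].
move=> /(S_zero_rb_identity hp hs) /(rb_identity_split hp hs) [hrs hrp].
split; [split=> // | by split; first exact: P_lin | exact: w_P_compat].
- by split=> c x y z; [apply: w_scalarl | apply: w_scalarr].
- by split; [exact: w_sym | exact: w_nondeg].
Qed.

Lemma gram_factorizable : quadratic_RB_LD sc pc P w lam -> factorizable sc pc r.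
Proof.
case=> [[_ _ _ hp hs] [_ hrs hrp] _]; split.
- exact/(S_zero_rb_identity hp hs)/rb_identity_circ.
- exact/invariant_tensorP.
- have := unitmx_mul N W; rewrite rW W_unit andbT => <-.
  by rewrite -scalemx1 unitmxZ ?unitmx1 // unitfE oppr_eq0.
Qed.
End GramMatrix.

Section FactorizableRotaBaxter.
Variables (K : fieldType) (n : nat) (lam : K).
Hypothesis lam0 : lam != 0.
Local Notation A := 'rV[K]_n.

Lemma mxform_compat_mulmx (W r : 'M[K]_n) : W^T = W -> W \in unitmx ->
  (forall x y : A, mxform W (x *m W *m r) y + mxform W x (y *m W *m r)
                   + lam * mxform W x y = 0) ->
  (r + r^T) *m W = (- lam)%:M.
Proof.
move=> W_sym W_unit compat.
have WNW : W *m ((r + r^T) *m W + lam%:M) = 0.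
  have -> : W *m ((r + r^T) *m W + lam%:M) =
            W *m r *m W + W *m (W *m r)^T + lam *: W.
    by rewrite trmx_mul W_sym mulmxDr mul_mx_scalar mulmxA mulmxDr mulmxDl !mulmxA.
  apply: mxform_inj => x y; rewrite !mxformDM mxformZM -mxform_mull -mxform_mulr.
  by rewrite !mulmxA compat /mxform mulmx0 mul0mx mxE.
have := congr1 (mulmx (invmx W)) WNW; rewrite mulKmx // mulmx0 => /eqP.
by rewrite addr_eq0 raddfN => /eqP.
Qed.

Lemma factorizable_quadratic_RB (sc pc : A -> A -> A) (r : 'M[K]_n) :
  LD_algebra sc pc -> factorizable sc pc r ->
  quadratic_RB_LD sc pc (fun x => Tr r (omega_sharp (omega_of r lam) x))
    (omega_of r lam) lam.
Proof.
move=> hLD [hS hinv N_unit]; have [hsc [hpc _]] := hLD.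
pose W := - lam *: invmx (r + r^T).
have W_sym : W^T = W.
  by rewrite /W linearZ /= trmx_inv raddfD /= trmxK addrC.
have W_unit : W \in unitmx by rewrite unitmxZ ?unitfE ?oppr_eq0 // unitmx_inv.
have rW : (r + r^T) *m W = (- lam)%:M by rewrite /W -scalemxAr mulmxV // scalemx1.
have wE x y : omega_of r lam x y = mxform W x y.
  by rewrite /omega_of pairing_mxform /mxform mulmx1 /W -scalemxAr -scalemxAl [RHS]mxE.
have PE x : Tr r (omega_sharp (omega_of r lam) x) = x *m W *m r.
  by rewrite /Tr (omega_sharp_mxform wE).
exact: (gram_quadratic_RB hsc hpc lam0 W_sym W_unit rW wE PE hLD hinv hS).
Qed.

Lemma quadratic_RB_factorizable (sc pc : A -> A -> A) (P : A -> A)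
    (w : A -> A -> K) (r : 'M[K]_n) :
  quadratic_RB_LD sc pc P w lam -> (forall x, Tr r (omega_sharp w x) = P x) ->
  factorizable sc pc r.
Proof.
move=> hQ hTr; have [[[hsc [hpc _]] wbil [w_sym w_nd] _ _] _ compat] := hQ.
pose W := gram_mx w; have wE := mxform_gram wbil.
have W_sym : W^T = W by apply/matrixP => i j; rewrite !mxE w_sym.
have W_unit : W \in unitmx.
  by apply: mxform_nondeg_unit => x h; apply: w_nd => y; rewrite wE h.
have PE x : P x = x *m W *m r by rewrite -hTr /Tr (omega_sharp_mxform wE).
have rW : (r + r^T) *m W = (- lam)%:M.
  by apply: mxform_compat_mulmx => // x y; rewrite -!PE -!wE compat.
exact: (gram_factorizable hsc hpc lam0 W_sym W_unit rW wE PE hQ).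
Qed.
End FactorizableRotaBaxter.

Theorem mainTheorem17 (K : fieldType) (n : nat) (lam : K) :
  lam != 0 ->
  (forall (sc pc : 'rV[K]_n -> 'rV[K]_n -> 'rV[K]_n) (r : 'M[K]_n),
      LD_algebra sc pc -> factorizable sc pc r ->
      quadratic_RB_LD sc pc
        (fun x => Tr r (omega_sharp (omega_of r lam) x))
        (omega_of r lam) lam)
  /\
  (forall (sc pc : 'rV[K]_n -> 'rV[K]_n -> 'rV[K]_n) (P : 'rV[K]_n -> 'rV[K]_n)
          (w : 'rV[K]_n -> 'rV[K]_n -> K) (r : 'M[K]_n),
      quadratic_RB_LD sc pc P w lam ->
      (forall x, Tr r (omega_sharp w x) = P x) ->
      factorizable sc pc r).
Proof.
move=> lam0; split; [exact: factorizable_quadratic_RB | exact: quadratic_RB_factorizable].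
Qed.
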